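(* \[ \lim_{M\to\infty}\ \lim_{k\to\infty}\ \sum_{i=M}^{k-M}\Pr[BINGO(i,k-i)]=0, \] where for each fixed $M$ the inner limit exists.
   Context: Fix $\alpha>1$. Let $(X_k,Y_k)_{k\ge2}$ be the Markov chain on $\mathbb N\times\mathbb N$ with $(X_2,Y_2)=(1,1)$ and, from state $(i,j)$, moving to $(i+1,j)$ with probability $i^\alpha/(i^\alpha+j^\alpha)$ and to $(i,j+1)$ with probability $j^\alpha/(i^\alpha+j^\alpha)$. $BINGO(i,j)$ is the event that the chain visits the state $(i,j)$. *)

From Stdlib Require Import Reals List Arith.
Import ListNotations.
Open Scope R_scope.

(* n^alpha for a natural number n >= 1 (0 for n = 0; never used at n = 0
   with nonzero weight). *)
Definition npow (alpha : R) (n : nat) : R :=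
  match n with 0%nat => 0 | _ => Rpower (INR n) alpha end.

Definition p_right (alpha : R) (i j : nat) : R :=
  npow alpha i / (npow alpha i + npow alpha j).
Definition p_up (alpha : R) (i j : nat) : R :=
  npow alpha j / (npow alpha i + npow alpha j).

(* law alpha t i = Pr[X_{t+2} = i] (then Y_{t+2} = t + 2 - i), computed by the
   forward (Chapman-Kolmogorov) recursion of the chain started at (1,1). *)
Fixpoint law (alpha : R) (t : nat) (i : nat) : R :=
  match t with
  | 0%nat => if Nat.eqb i 1 then 1 else 0
  | S t' =>
      (match i with
       | 0%nat => 0
       | S i' => law alpha t' i' * p_right alpha i' (t' + 2 - i')
       end)
      + law alpha t' i * p_up alpha i (t' + 2 - i)
  end.

(* Pr[BINGO(i,j)]: since X_k + Y_k = k, the chain visits (i,j) iff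
   (X_{i+j}, Y_{i+j}) = (i,j). States with a zero coordinate are never visited. *)
Definition bingo (alpha : R) (i j : nat) : R :=
  match i, j with
  | 0%nat, _ => 0
  | _, 0%nat => 0
  | _, _ => law alpha (i + j - 2) i
  end.

Definition range_sum (f : nat -> R) (a b : nat) : R :=
  fold_right Rplus 0 (map f (seq a (S b - a))).

(* For [y > 0] the complex product
     Z(i,j) = prod_(m<i) (1 - I y m^-alpha) * prod_(m<j) (1 + I y m^-alpha)
   is a martingale of the chain, so E[Re Z(X_k, Y_k)] = 1.  Multiplying Z(i,j) by the missing
   factors Zrest(i,j) gives the real number Q_(i+j) = prod_(m<i+j) (1 + y^2 m^-2alpha) >= 1 + y^2.
   Since sum m^-alpha converges, Zrest is close to 1 when min(i,j) >= M, so there Re Z is close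
   to Q_k; in general Re Z >= -Q_k, and Re Z >= -Q_k C/y with C = sum_(m<m0) m^alpha when
   min(i,j) < m0.  Comparing indicators with Re Z / Q_k yields
     (2 - delta_M) p_M <= p_m0 + C/y + 1/(1 + y^2)
   for p_M = lim_k Pr[min(X_k, Y_k) >= M], the inner limit of the theorem.  Choosing m0 near
   the limit of the decreasing sequence p, then y large, then M large, forces that limit to 0. *)

From Stdlib Require Import Reals Lra Lia.
From Coquelicot Require Import Complex.
Open Scope R_scope.

Fixpoint sumn (g : nat -> R) (n : nat) : R :=
  match n with 0%nat => 0 | S n' => sumn g n' + g n' end.

Lemma sumn_ext g h n : (forall i, (i < n)%nat -> g i = h i) -> sumn g n = sumn h n.
Proof.
  induction n as [|n IH]; intros Hgh; simpl; [reflexivity|].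
  rewrite IH by (intros; apply Hgh; lia). now rewrite Hgh by lia.
Qed.

Lemma sumn_le g h n : (forall i, (i < n)%nat -> g i <= h i) -> sumn g n <= sumn h n.
Proof.
  induction n as [|n IH]; intros Hgh; simpl; [lra|].
  apply Rplus_le_compat; [apply IH; intros; apply Hgh|apply Hgh]; lia.
Qed.

Lemma sumn_nonneg g n : (forall i, 0 <= g i) -> 0 <= sumn g n.
Proof. intros Hg; induction n as [|n IH]; simpl; [lra|]; specialize (Hg n); lra. Qed.

Lemma sumn_zero g n : (forall i, (i < n)%nat -> g i = 0) -> sumn g n = 0.
Proof.
  intros Hg. rewrite (sumn_ext g (fun _ => 0)) by auto; clear Hg.
  induction n as [|n IH]; simpl; [|rewrite IH]; lra.
Qed.

Lemma sumn_plus g h n : sumn (fun i => g i + h i) n = sumn g n + sumn h n.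
Proof. induction n as [|n IH]; simpl; [|rewrite IH]; lra. Qed.

Lemma sumn_scal a g n : sumn (fun i => a * g i) n = a * sumn g n.
Proof. induction n as [|n IH]; simpl; [|rewrite IH]; lra. Qed.

Lemma sumn_S g n : sumn g (S n) = sumn g n + g n.
Proof. reflexivity. Qed.

Lemma sumn_split g a n : sumn g (a + n) = sumn g a + sumn (fun i => g (a + i)%nat) n.
Proof.
  induction n as [|n IH]; [rewrite Nat.add_0_r; simpl; lra|].
  rewrite Nat.add_succ_r; simpl; rewrite IH; lra.
Qed.

Lemma sumn_shift g n : sumn g (S n) = g 0%nat + sumn (fun i => g (S i)) n.
Proof. change (S n) with (1 + n)%nat; rewrite sumn_split; simpl; lra. Qed.

Lemma sumn_ge_term g n k : (forall i, 0 <= g i) -> (k < n)%nat -> g k <= sumn g n.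
Proof.
  intros Hg Hk. replace n with (k + S (n - S k))%nat by lia.
  rewrite sumn_split, sumn_shift, Nat.add_0_r.
  pose proof (sumn_nonneg g k Hg).
  pose proof (sumn_nonneg (fun i => g (k + S i)%nat) (n - S k) (fun i => Hg _)); lra.
Qed.

Lemma range_sum_sumn f a b : range_sum f a b = sumn (fun i => f (a + i)%nat) (S b - a).
Proof.
  unfold range_sum. generalize (S b - a)%nat as n; intros n; clear b; revert a.
  induction n as [|n IH]; intros a; [reflexivity|].
  simpl List.map; simpl List.fold_right. rewrite IH, sumn_shift, Nat.add_0_r.
  rewrite (sumn_ext _ (fun i => f (a + S i)%nat)) by (intros; f_equal; lia); reflexivity.
Qed.

Lemma range_sum_indicator f a b N : (b < N)%nat ->
  range_sum f a b = sumn (fun i => if andb (a <=? i)%nat (i <=? b)%nat then f i else 0) N.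
Proof.
  intros HbN. rewrite range_sum_sumn.
  set (g := fun i => if andb (a <=? i)%nat (i <=? b)%nat then f i else 0).
  destruct (Nat.le_gt_cases a (S b)) as [Hab|Hab].
  - replace N with (a + (S b - a) + (N - S b))%nat by lia. rewrite !sumn_split.
    rewrite (sumn_zero g a), (sumn_zero (fun i => g (a + (S b - a) + i)%nat)).
    + rewrite (sumn_ext (fun i => g (a + i)%nat) (fun i => f (a + i)%nat)); [lra|].
      intros i Hi; unfold g.
      now rewrite (proj2 (Nat.leb_le a (a + i))), (proj2 (Nat.leb_le (a + i) b)) by lia.
    + intros i _; unfold g.
      now rewrite (proj2 (Nat.leb_gt (a + (S b - a) + i) b)), Bool.andb_false_r by lia.
    + intros i Hi; unfold g. now rewrite (proj2 (Nat.leb_gt a i)) by lia.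
  - replace (S b - a)%nat with 0%nat by lia. symmetry; apply sumn_zero; intros i _; unfold g.
    destruct (a <=? i)%nat eqn:Hai; [|reflexivity]. apply Nat.leb_le in Hai.
    now rewrite (proj2 (Nat.leb_gt i b)) by lia.
Qed.

Lemma exp_le x y : x <= y -> exp x <= exp y.
Proof. intros [Hlt|Heq]; [left; now apply exp_increasing|now rewrite Heq; right]. Qed.

Lemma ln_le_sub1 x : 0 < x -> ln x <= x - 1.
Proof.
  intros Hx. apply Rnot_lt_le; intros Hlt. apply exp_increasing in Hlt.
  rewrite exp_ln in Hlt by lra. pose proof (exp_ineq1_le (x - 1)); lra.
Qed.

Lemma Rpower_pos x y : 0 < Rpower x y.
Proof. apply exp_pos. Qed.

Lemma Rpower_opp_le_base b x z : 0 < b -> 0 < x <= z -> Rpower z (- b) <= Rpower x (- b).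
Proof.
  intros Hb Hxz. rewrite !Rpower_Ropp. apply Rinv_le_contravar; [apply Rpower_pos|].
  apply Rle_Rpower_l; lra.
Qed.

(* [b x^(-b-1) <= b int_(x-1)^x t^(-b-1) dt = (x-1)^(-b) - x^(-b)] *)
Lemma Rpower_le_telescope b x : 0 < b -> 1 < x ->
  b * Rpower x (- (b + 1)) <= Rpower (x - 1) (- b) - Rpower x (- b).
Proof.
  intros Hb Hx.
  assert (Hln : ln (x - 1) <= ln x - / x).
  { replace (x - 1) with (x * ((x - 1) / x)) at 1 by (field; lra).
    rewrite ln_mult by (try apply Rdiv_lt_0_compat; lra).
    pose proof (ln_le_sub1 ((x - 1) / x) ltac:(apply Rdiv_lt_0_compat; lra)) as Hle.
    replace ((x - 1) / x - 1) with (- / x) in Hle by (field; lra); lra. }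
  assert (Hexp : Rpower x (- b) * exp (b / x) <= Rpower (x - 1) (- b)).
  { unfold Rpower. rewrite <- exp_plus. apply exp_le. unfold Rdiv. nra. }
  assert (Hsplit : Rpower x (- (b + 1)) = Rpower x (- b) * / x).
  { replace (- (b + 1)) with (- b + - (1)) by ring.
    now rewrite Rpower_plus, (Rpower_Ropp x 1), Rpower_1 by lra. }
  pose proof (exp_ineq1_le (b / x)). pose proof (Rpower_pos x (- b)).
  rewrite Hsplit. unfold Rdiv in *. nra.
Qed.

Lemma sum_Rpower_le_telescope b a n : 0 < b -> 1 < a ->
  b * sumn (fun k => Rpower (a + INR k) (- (b + 1))) n
  <= Rpower (a - 1) (- b) - Rpower (a + INR n - 1) (- b).
Proof.
  intros Hb Ha. induction n as [|n IH].
  - simpl; rewrite Rplus_0_r; lra.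
  - simpl sumn. rewrite S_INR.
    pose proof (Rpower_le_telescope b (a + INR n) Hb ltac:(pose proof (pos_INR n); lra)).
    replace (a + (INR n + 1) - 1) with (a + INR n) by ring. nra.
Qed.

Definition zeta_tail (alpha : R) (M : nat) : R := Rpower (INR M - 1) (1 - alpha) / (alpha - 1).

Lemma npow_Rpower alpha n : (1 <= n)%nat -> npow alpha n = Rpower (INR n) alpha.
Proof. destruct n; [lia|reflexivity]. Qed.

Lemma sum_inv_npow_le_zeta_tail alpha M a n : 1 < alpha -> (2 <= M)%nat -> (M <= a)%nat ->
  sumn (fun k => / npow alpha (a + k)) n <= zeta_tail alpha M.
Proof.
  intros Halpha HM HMa.
  assert (HMR : 2 <= INR M) by (apply (le_INR 2); lia).
  assert (HaR : INR M <= INR a) by (apply le_INR; lia).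
  set (b := alpha - 1).
  rewrite (sumn_ext _ (fun k => Rpower (INR a + INR k) (- (b + 1)))).
  2: { intros k _. rewrite npow_Rpower, plus_INR, <- Rpower_Ropp by lia. unfold b; f_equal; ring. }
  pose proof (sum_Rpower_le_telescope b (INR a) n ltac:(unfold b; lra) ltac:(lra)).
  pose proof (Rpower_pos (INR a + INR n - 1) (- b)).
  pose proof (Rpower_opp_le_base b (INR M - 1) (INR a - 1) ltac:(unfold b; lra) ltac:(lra)).
  unfold zeta_tail. replace (1 - alpha) with (- b) by (unfold b; ring). fold b.
  apply (Rmult_le_reg_l b); [unfold b; lra|]. field_simplify; unfold b in *; lra.
Qed.

Lemma zeta_tail_small alpha eps N0 : 1 < alpha -> 0 < eps ->
  exists M, (N0 <= M)%nat /\ (2 <= M)%nat /\ zeta_tail alpha M <= eps.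
Proof.
  intros Halpha Heps. set (b := alpha - 1). assert (Hb : 0 < b) by (unfold b; lra).
  set (r := Rpower (eps * b) (- / b)).
  destruct (INR_unbounded (r + INR N0 + 2)) as [M HM].
  assert (Hr : 0 < r) by apply Rpower_pos. pose proof (pos_INR N0).
  exists M; split; [|split].
  - apply INR_le; lra.
  - apply (INR_le 2); simpl; lra.
  - unfold zeta_tail. replace (1 - alpha) with (- b) by (unfold b; ring). fold b.
    apply (Rmult_le_reg_r b); [lra|]. unfold Rdiv; rewrite Rmult_assoc, Rinv_l, Rmult_1_r by lra.
    eapply Rle_trans; [apply (Rpower_opp_le_base b r); lra|].
    unfold r; rewrite Rpower_mult. replace (- / b * - b) with 1 by (field; lra).
    rewrite Rpower_1 by (apply Rmult_lt_0_compat; lra); lra.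
Qed.

Section Chain.
Variable alpha : R.

Lemma npow_nonneg n : 0 <= npow alpha n.
Proof. destruct n; [apply Rle_refl|left; apply Rpower_pos]. Qed.

Lemma npow_pos n : (1 <= n)%nat -> 0 < npow alpha n.
Proof. destruct n; [lia|intros; apply Rpower_pos]. Qed.

Lemma p_right_nonneg i j : 0 <= p_right alpha i j.
Proof.
  unfold p_right. pose proof (npow_nonneg i); pose proof (npow_nonneg j).
  destruct (Req_dec (npow alpha i + npow alpha j) 0) as [->|Hne].
  - unfold Rdiv; rewrite Rinv_0; lra.
  - apply Rmult_le_pos, Rlt_le, Rinv_0_lt_compat; lra.
Qed.

Lemma p_up_nonneg i j : 0 <= p_up alpha i j.
Proof.
  unfold p_up. pose proof (npow_nonneg i); pose proof (npow_nonneg j).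
  destruct (Req_dec (npow alpha i + npow alpha j) 0) as [->|Hne].
  - unfold Rdiv; rewrite Rinv_0; lra.
  - apply Rmult_le_pos, Rlt_le, Rinv_0_lt_compat; lra.
Qed.

Lemma p_right_add_p_up i j : (1 <= i)%nat -> (1 <= j)%nat -> p_right alpha i j + p_up alpha i j = 1.
Proof.
  intros Hi Hj. pose proof (npow_pos i Hi); pose proof (npow_pos j Hj).
  unfold p_right, p_up. field; lra.
Qed.

Lemma law_nonneg t i : 0 <= law alpha t i.
Proof.
  revert i; induction t as [|t IH]; intros i; simpl.
  - destruct (Nat.eqb i 1); lra.
  - apply Rplus_le_le_0_compat; [destruct i; [lra|]|];
      apply Rmult_le_pos; auto using p_right_nonneg, p_up_nonneg.
Qed.

Lemma law_0 t : law alpha t 0 = 0.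
Proof. induction t as [|t IH]; simpl; [reflexivity|rewrite IH; ring]. Qed.

Lemma law_large t i : (t + 2 <= i)%nat -> law alpha t i = 0.
Proof.
  revert i; induction t as [|t IH]; intros i Hi; simpl.
  - destruct i as [|[|i]]; [lia|lia|reflexivity].
  - destruct i as [|i]; [lia|]. rewrite !IH by lia; ring.
Qed.

Definition expect (t : nat) (f : nat -> nat -> R) : R :=
  sumn (fun i => law alpha t i * f i (t + 2 - i)%nat) (t + 2).

Definition trans (f : nat -> nat -> R) (i j : nat) : R :=
  p_right alpha i j * f (S i) j + p_up alpha i j * f i (S j).

Lemma expect_S t f : expect (S t) f = expect t (trans f).
Proof.
  unfold expect, trans. replace (S t + 2)%nat with (S (t + 2)) by lia. simpl law.
  rewrite (sumn_ext _ (fun i =>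
      match i with 0%nat => 0 | S i' => law alpha t i' * p_right alpha i' (t + 2 - i') end
        * f i (S (t + 2) - i)%nat
      + law alpha t i * p_up alpha i (t + 2 - i) * f i (S (t + 2) - i)%nat)) by (intros; ring).
  rewrite sumn_plus, sumn_shift, sumn_S, law_large by lia.
  rewrite !Rmult_0_l, Rplus_0_l, Rplus_0_r, <- sumn_plus.
  apply sumn_ext; intros i Hi.
  change (S (t + 2) - S i)%nat with (t + 2 - i)%nat.
  replace (S (t + 2) - i)%nat with (S (t + 2 - i)) by lia; ring.
Qed.

Lemma expect_le t f g :
  (forall i, (1 <= i <= t + 1)%nat -> f i (t + 2 - i)%nat <= g i (t + 2 - i)%nat) ->
  expect t f <= expect t g.
Proof.
  intros Hfg. apply sumn_le; intros [|i] Hi.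
  - rewrite law_0; lra.
  - apply Rmult_le_compat_l; [apply law_nonneg|apply Hfg; lia].
Qed.

Lemma expect_ext t f g :
  (forall i, (1 <= i <= t + 1)%nat -> f i (t + 2 - i)%nat = g i (t + 2 - i)%nat) ->
  expect t f = expect t g.
Proof. intros Hfg; apply Rle_antisym; apply expect_le; intros i Hi; rewrite Hfg by lia; lra. Qed.

Lemma expect_lin t a b f g h : (forall i j, h i j = a * f i j + b * g i j) ->
  expect t h = a * expect t f + b * expect t g.
Proof.
  intros Hh; unfold expect; rewrite <- !sumn_scal, <- sumn_plus.
  apply sumn_ext; intros; rewrite Hh; ring.
Qed.

Definition harmonic (f : nat -> nat -> R) : Prop :=
  forall i j, (1 <= i)%nat -> (1 <= j)%nat -> trans f i j = f i j.

Lemma expect_harmonic f t : harmonic f -> expect t f = f 1%nat 1%nat.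
Proof.
  intros Hf. induction t as [|t IH].
  - unfold expect; simpl; ring.
  - rewrite expect_S, <- IH; apply expect_ext; intros i Hi; apply Hf; lia.
Qed.

Lemma expect_const t c : expect t (fun _ _ => c) = c.
Proof.
  apply (expect_harmonic (fun _ _ => c)); intros i j Hi Hj; unfold trans.
  rewrite <- Rmult_plus_distr_r, p_right_add_p_up by assumption; ring.
Qed.

Definition both_ge (m i j : nat) : R := if andb (m <=? i)%nat (m <=? j)%nat then 1 else 0.

Lemma both_ge_bounds m i j : 0 <= both_ge m i j <= 1.
Proof. unfold both_ge; destruct (andb _ _); lra. Qed.

Lemma both_ge_le m m' i j i' j' : (m' <= m)%nat -> (i <= i')%nat -> (j <= j')%nat ->
  both_ge m i j <= both_ge m' i' j'.
Proof.
  intros Hm Hi Hj. unfold both_ge.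
  destruct (m <=? i)%nat eqn:E1; destruct (m <=? j)%nat eqn:E2; simpl;
    try (destruct (andb _ _); lra).
  apply Nat.leb_le in E1, E2.
  rewrite (proj2 (Nat.leb_le m' i')), (proj2 (Nat.leb_le m' j')) by lia; simpl; lra.
Qed.

Lemma both_ge_1 m i j : (m <= i)%nat -> (m <= j)%nat -> both_ge m i j = 1.
Proof.
  intros Hi Hj; unfold both_ge.
  now rewrite (proj2 (Nat.leb_le m i)), (proj2 (Nat.leb_le m j)).
Qed.

Lemma both_ge_0 m i j : (i < m)%nat \/ (j < m)%nat -> both_ge m i j = 0.
Proof.
  intros Hij; unfold both_ge.
  destruct Hij as [Hlt|Hlt]; apply Nat.leb_gt in Hlt; rewrite Hlt;
    [|rewrite Bool.andb_false_r]; reflexivity.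
Qed.

Definition occ (t m : nat) : R := expect t (both_ge m).

Lemma occ_bounds t m : 0 <= occ t m <= 1.
Proof.
  unfold occ; rewrite <- (expect_const t 0) at 1; rewrite <- (expect_const t 1).
  split; apply expect_le; intros; apply both_ge_bounds.
Qed.

Lemma occ_le_S t m : occ t m <= occ (S t) m.
Proof.
  unfold occ; rewrite expect_S; apply expect_le; intros i Hi; unfold trans.
  set (j := (t + 2 - i)%nat).
  pose proof (both_ge_le m m i j (S i) j (le_n m) (le_S _ _ (le_n i)) (le_n j)).
  pose proof (both_ge_le m m i j i (S j) (le_n m) (le_n i) (le_S _ _ (le_n j))).
  pose proof (p_right_add_p_up i j ltac:(lia) ltac:(unfold j; lia)).
  pose proof (p_right_nonneg i j); pose proof (p_up_nonneg i j). nra.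
Qed.

Lemma occ_S_le t m : occ t (S m) <= occ t m.
Proof. apply expect_le; intros; apply both_ge_le; lia. Qed.

Lemma range_sum_bingo t M :
  range_sum (fun i => bingo alpha i (t + 2 - i)) M (t + 2 - M) = occ t M.
Proof.
  rewrite (range_sum_indicator _ _ _ (S (t + 2))) by lia. rewrite sumn_S.
  replace (bingo alpha (t + 2) (t + 2 - (t + 2))) with 0
    by (rewrite Nat.sub_diag, Nat.add_comm; reflexivity).
  replace (if andb (M <=? t + 2)%nat (t + 2 <=? t + 2 - M)%nat then 0 else 0) with 0
    by (now destruct (andb _ _)).
  rewrite Rplus_0_r. apply sumn_ext; intros [|i] Hi.
  - rewrite law_0, Rmult_0_l. now destruct (andb _ _).
  - unfold both_ge. destruct (t + 2 - S i)%nat as [|j] eqn:Hj; [lia|].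
    replace (bingo alpha (S i) (S j)) with (law alpha t (S i)) by (unfold bingo; f_equal; lia).
    destruct (M <=? S i)%nat eqn:E1, (S i <=? t + 2 - M)%nat eqn:E2, (M <=? S j)%nat eqn:E3;
      simpl; try ring; exfalso;
      repeat match goal with
      | H : (_ <=? _)%nat = true |- _ => apply Nat.leb_le in H
      | H : (_ <=? _)%nat = false |- _ => apply Nat.leb_gt in H
      end; lia.
Qed.
End Chain.

Lemma Re_ge_opp_Cmod (z : C) : - Cmod z <= Re z.
Proof. pose proof (re_le_Cmod z); pose proof (Rle_abs (- Re z)); rewrite Rabs_Ropp in *; lra. Qed.

Lemma Cmod_le_1_add_sub1 (z : C) : Cmod z <= 1 + Cmod (z - 1).
Proof.
  replace z with ((z - 1) + 1)%C at 1 by ring.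
  eapply Rle_trans; [apply Cmod_triangle|]; rewrite Cmod_1; lra.
Qed.

Lemma Cmod_1_pair_ge1 x : 1 <= Cmod (1, x).
Proof.
  unfold Cmod; simpl. rewrite <- sqrt_1 at 1. apply sqrt_le_1_alt.
  pose proof (pow2_ge_0 x); simpl in *; lra.
Qed.

Lemma Cmod_1_pair_ge x : Rabs x <= Cmod (1, x).
Proof.
  unfold Cmod; simpl. rewrite <- sqrt_Rsqr_abs. apply sqrt_le_1_alt. unfold Rsqr; simpl; nra.
Qed.

Lemma Cmod_1_pair_sub1 x : Cmod ((1, x) - 1)%C = Rabs x.
Proof.
  unfold Cmod, Cminus, Cplus, Copp; simpl. rewrite <- sqrt_Rsqr_abs. f_equal. unfold Rsqr; ring.
Qed.

Lemma Cmod_mul_sub1_le (z w : C) s r :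
  Cmod (z - 1) <= exp s - 1 -> Cmod (w - 1) <= exp r - 1 ->
  Cmod (z * w - 1) <= exp (s + r) - 1.
Proof.
  intros Hz Hw. replace (z * w - 1)%C with ((z - 1) * w + (w - 1))%C by ring.
  eapply Rle_trans; [apply Cmod_triangle|]. rewrite Cmod_mult, exp_plus.
  pose proof (Cmod_le_1_add_sub1 w). pose proof (Cmod_ge_0 (z - 1)%C). pose proof (Cmod_ge_0 w).
  assert (Cmod (z - 1) * Cmod w <= (exp s - 1) * exp r) by (apply Rmult_le_compat; lra).
  lra.
Qed.

Fixpoint cprod (u : nat -> C) (a n : nat) : C :=
  match n with 0%nat => 1%C | S n' => (cprod u a n' * u (a + n')%nat)%C end.

Lemma cprod_add u a n m : cprod u a (n + m) = (cprod u a n * cprod u (a + n) m)%C.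
Proof.
  induction m as [|m IH]; simpl; [rewrite Nat.add_0_r; ring|].
  rewrite Nat.add_succ_r; simpl; rewrite IH, Nat.add_assoc; ring.
Qed.

Section ProductBounds.
Variable u : nat -> C.
Hypothesis Hu : forall m, 1 <= Cmod (u m).

Lemma Cmod_cprod_ge1 a n : 1 <= Cmod (cprod u a n).
Proof.
  induction n as [|n IH]; simpl; [rewrite Cmod_1; lra|].
  rewrite Cmod_mult; specialize (Hu (a + n)%nat); nra.
Qed.

Lemma Cmod_cprod_ge_head a n : (1 <= n)%nat -> Cmod (u a) <= Cmod (cprod u a n).
Proof.
  intros Hn. replace n with (1 + (n - 1))%nat by lia.
  rewrite cprod_add, Cmod_mult; simpl; rewrite Nat.add_0_r, Cmult_1_l.
  pose proof (Cmod_cprod_ge1 (a + 1) (n - 1)); specialize (Hu a); nra.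
Qed.
End ProductBounds.

Lemma Cmod_cprod_sub1_le u a n :
  Cmod (cprod u a n - 1) <= exp (sumn (fun k => Cmod (u (a + k)%nat - 1)) n) - 1.
Proof.
  induction n as [|n IH]; simpl.
  - replace (1 - 1)%C with (RtoC 0) by ring. rewrite Cmod_0, exp_0; lra.
  - apply Cmod_mul_sub1_le; [exact IH|].
    pose proof (exp_ineq1_le (Cmod (u (a + n)%nat - 1))); lra.
Qed.

Section Martingale.
Variables alpha y : R.
Hypothesis Halpha : 1 < alpha.
Hypothesis Hy : 0 < y.

(* Since [npow alpha 0 = 0] and [y / 0 = 0], the factor [m = 0] of every product below is [1]. *)
Definition coef (m : nat) : R := y / npow alpha m.
Definition zminus (m : nat) : C := (1, - coef m).
Definition zplus (m : nat) : C := (1, coef m).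

Definition Z (i j : nat) : C := (cprod zminus 0 i * cprod zplus 0 j)%C.
Definition Zrest (i j : nat) : C := (cprod zminus i j * cprod zplus j i)%C.

Fixpoint Q (n : nat) : R :=
  match n with 0%nat => 1 | S n' => Q n' * (1 + coef n' ^ 2) end.

Lemma coef_nonneg m : 0 <= coef m.
Proof.
  unfold coef. destruct m as [|m]; [unfold npow, Rdiv; rewrite Rinv_0; lra|].
  apply Rlt_le, Rdiv_lt_0_compat; [lra|apply npow_pos; lia].
Qed.

Lemma coef_1 : coef 1 = y.
Proof. unfold coef, npow, Rpower; simpl. rewrite ln_1, Rmult_0_r, exp_0; field. Qed.

Lemma harmonic_ReZ : harmonic alpha (fun i j => Re (Z i j)).
Proof.
  intros i j Hi Hj. unfold trans.
  assert (HZi : Z (S i) j = (Z i j * zminus i)%C) by (unfold Z; simpl; ring).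
  assert (HZj : Z i (S j) = (Z i j * zplus j)%C) by (unfold Z; simpl; ring).
  rewrite HZi, HZj. destruct (Z i j) as [x v].
  pose proof (npow_pos alpha i Hi); pose proof (npow_pos alpha j Hj).
  unfold zminus, zplus, coef, p_right, p_up; simpl. field; lra.
Qed.

Lemma expect_ReZ t : expect alpha t (fun i j => Re (Z i j)) = 1.
Proof.
  rewrite (expect_harmonic alpha _ t harmonic_ReZ).
  unfold Z, zminus, zplus, coef, npow, Rdiv; simpl. rewrite Rinv_0; ring.
Qed.

Lemma Q_ge1 n : 1 <= Q n.
Proof. induction n as [|n IH]; simpl; [lra|]. pose proof (pow2_ge_0 (coef n)); nra. Qed.

Lemma Q_ge_sq n : (2 <= n)%nat -> 1 + y ^ 2 <= Q n.
Proof.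
  intros Hn. induction n as [|n IH]; [lia|]. pose proof (pow2_ge_0 (coef n)).
  destruct (Nat.eq_dec n 1) as [->|Hn1].
  - simpl Q; rewrite coef_1.
    pose proof (pow2_ge_0 (coef 0)); pose proof (pow2_ge_0 y); simpl in *; nra.
  - specialize (IH ltac:(lia)). simpl. nra.
Qed.

Lemma Z_mul_Zrest i j : (Z i j * Zrest i j)%C = RtoC (Q (i + j)).
Proof.
  assert (Hprod : forall n, (cprod zminus 0 n * cprod zplus 0 n)%C = RtoC (Q n)).
  { induction n as [|n IH]; simpl; [now apply injective_projections; simpl; ring|].
    transitivity ((cprod zminus 0 n * cprod zplus 0 n) * (zminus n * zplus n))%C; [ring|].
    rewrite IH. unfold zminus, zplus. apply injective_projections; simpl; ring. }
  unfold Z, Zrest.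
  rewrite <- Hprod, (cprod_add zminus 0 i j), (Nat.add_comm i j), (cprod_add zplus 0 j i).
  simpl; ring.
Qed.

Lemma Cmod_Z_mul_Cmod_Zrest i j : Cmod (Z i j) * Cmod (Zrest i j) = Q (i + j).
Proof.
  rewrite <- Cmod_mult, Z_mul_Zrest, Cmod_R, Rabs_right; [reflexivity|].
  apply Rle_ge; pose proof (Q_ge1 (i + j)); lra.
Qed.

Lemma Cmod_Zrest_ge1 i j : 1 <= Cmod (Zrest i j).
Proof.
  unfold Zrest; rewrite Cmod_mult.
  pose proof (Cmod_cprod_ge1 zminus (fun m => Cmod_1_pair_ge1 _) i j).
  pose proof (Cmod_cprod_ge1 zplus (fun m => Cmod_1_pair_ge1 _) j i); nra.
Qed.

Lemma coef_le_Cmod_Zrest_l i j : (1 <= j)%nat -> coef i <= Cmod (Zrest i j).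
Proof.
  intros Hj; unfold Zrest; rewrite Cmod_mult.
  pose proof (Cmod_cprod_ge_head zminus (fun m => Cmod_1_pair_ge1 _) i j Hj) as Hhead.
  pose proof (Cmod_cprod_ge1 zplus (fun m => Cmod_1_pair_ge1 _) j i).
  pose proof (Cmod_1_pair_ge (- coef i)) as Hcoef.
  rewrite Rabs_Ropp, Rabs_right in Hcoef by (apply Rle_ge, coef_nonneg).
  change (zminus i) with ((1, - coef i) : C) in Hhead.
  pose proof (Cmod_ge_0 (cprod zminus i j)); nra.
Qed.

Lemma coef_le_Cmod_Zrest_r i j : (1 <= i)%nat -> coef j <= Cmod (Zrest i j).
Proof.
  intros Hi; unfold Zrest; rewrite Cmod_mult.
  pose proof (Cmod_cprod_ge1 zminus (fun m => Cmod_1_pair_ge1 _) i j).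
  pose proof (Cmod_cprod_ge_head zplus (fun m => Cmod_1_pair_ge1 _) j i Hi) as Hhead.
  pose proof (Cmod_1_pair_ge (coef j)) as Hcoef.
  rewrite Rabs_right in Hcoef by (apply Rle_ge, coef_nonneg).
  change (zplus j) with ((1, coef j) : C) in Hhead.
  pose proof (Cmod_ge_0 (cprod zplus j i)); nra.
Qed.

Lemma ReZ_ge_div i j r : 0 < r -> r <= Cmod (Zrest i j) -> - (Q (i + j) / r) <= Re (Z i j).
Proof.
  intros Hr Hrest. eapply Rle_trans; [|apply Re_ge_opp_Cmod]. apply Ropp_le_contravar.
  apply (Rmult_le_reg_r r); [exact Hr|].
  unfold Rdiv; rewrite Rmult_assoc, Rinv_l, Rmult_1_r by lra.
  rewrite <- Cmod_Z_mul_Cmod_Zrest. apply Rmult_le_compat_l; [apply Cmod_ge_0|assumption].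
Qed.

Lemma sum_coef_le_tail M a n : (2 <= M)%nat -> (M <= a)%nat ->
  sumn (fun k => coef (a + k)) n <= y * zeta_tail alpha M.
Proof.
  intros HM HMa. unfold coef; unfold Rdiv; rewrite sumn_scal.
  apply Rmult_le_compat_l; [lra|]. now apply sum_inv_npow_le_zeta_tail.
Qed.

Definition delta (M : nat) : R := exp (2 * (y * zeta_tail alpha M)) - 1.

Lemma Cmod_Zrest_sub1_le M i j : (2 <= M)%nat -> (M <= i)%nat -> (M <= j)%nat ->
  Cmod (Zrest i j - 1) <= delta M.
Proof.
  intros HM Hi Hj. unfold Zrest.
  eapply Rle_trans; [apply Cmod_mul_sub1_le; apply Cmod_cprod_sub1_le|].
  unfold delta; apply Rplus_le_compat_r, exp_le.
  rewrite (sumn_ext _ (fun k => coef (i + k))),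
    (sumn_ext (fun k => Cmod (zplus _ - 1)) (fun k => coef (j + k))).
  - pose proof (sum_coef_le_tail M i j HM Hi); pose proof (sum_coef_le_tail M j i HM Hj); lra.
  - intros k _; unfold zplus; rewrite Cmod_1_pair_sub1, Rabs_right;
      [reflexivity|apply Rle_ge, coef_nonneg].
  - intros k _; unfold zminus; rewrite Cmod_1_pair_sub1, Rabs_Ropp, Rabs_right;
      [reflexivity|apply Rle_ge, coef_nonneg].
Qed.

Lemma ReZ_ge_large M i j : (2 <= M)%nat -> (M <= i)%nat -> (M <= j)%nat ->
  Q (i + j) * (1 - delta M) <= Re (Z i j).
Proof.
  intros HM Hi Hj.
  assert (HZ : Cmod (Z i j) <= Q (i + j)).
  { rewrite <- Cmod_Z_mul_Cmod_Zrest.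
    pose proof (Cmod_Zrest_ge1 i j); pose proof (Cmod_ge_0 (Z i j)); nra. }
  assert (Hdev : Cmod (Z i j - RtoC (Q (i + j))) <= Q (i + j) * delta M).
  { rewrite <- Z_mul_Zrest.
    replace (Z i j - Z i j * Zrest i j)%C with (- (Z i j * (Zrest i j - 1)))%C by ring.
    rewrite Cmod_opp, Cmod_mult.
    apply Rmult_le_compat; auto using Cmod_ge_0, Cmod_Zrest_sub1_le. }
  pose proof (Re_ge_opp_Cmod (Z i j - RtoC (Q (i + j)))) as Hre.
  replace (Re (Z i j - RtoC (Q (i + j)))) with (Re (Z i j) - Q (i + j)) in Hre
    by (unfold Re; simpl; ring).
  lra.
Qed.

Definition inv_coef_sum (m0 : nat) : R := sumn (fun m => npow alpha m) m0 / y.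

Lemma inv_coef_sum_nonneg m0 : 0 <= inv_coef_sum m0.
Proof.
  apply Rmult_le_pos; [apply sumn_nonneg, npow_nonneg|apply Rlt_le, Rinv_0_lt_compat, Hy].
Qed.

Lemma ReZ_ge_small m0 i j : (1 <= i)%nat -> (1 <= j)%nat -> (i < m0)%nat \/ (j < m0)%nat ->
  - (Q (i + j) * inv_coef_sum m0) <= Re (Z i j).
Proof.
  intros Hi Hj Hsmall.
  assert (Hk : exists k, (1 <= k)%nat /\ (k < m0)%nat /\ coef k <= Cmod (Zrest i j)).
  { destruct Hsmall; [exists i|exists j]; auto using coef_le_Cmod_Zrest_l, coef_le_Cmod_Zrest_r. }
  destruct Hk as [k [Hk1 [Hkm0 Hk]]].
  pose proof (npow_pos alpha k Hk1).
  eapply Rle_trans; [|apply (ReZ_ge_div i j (coef k)); [apply Rdiv_lt_0_compat; lra|exact Hk]].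
  apply Ropp_le_contravar. unfold inv_coef_sum, coef.
  replace (Q (i + j) / (y / npow alpha k)) with (Q (i + j) * (npow alpha k / y)) by (field; lra).
  pose proof (Q_ge1 (i + j)).
  apply Rmult_le_compat_l; [lra|].
  apply Rmult_le_compat_r; [apply Rlt_le, Rinv_0_lt_compat, Hy|].
  apply (sumn_ge_term (fun m => npow alpha m)); [apply npow_nonneg|exact Hkm0].
Qed.

Lemma indicators_low_le_ReZ m0 i j : (1 <= i)%nat -> (1 <= j)%nat ->
  Q (i + j) * ((inv_coef_sum m0 - 1) * both_ge m0 i j - inv_coef_sum m0) <= Re (Z i j).
Proof.
  intros Hi Hj.
  destruct (Nat.le_gt_cases m0 i) as [Hi0|Hi0]; [destruct (Nat.le_gt_cases m0 j) as [Hj0|Hj0]|].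
  - rewrite both_ge_1 by auto.
    pose proof (ReZ_ge_div i j 1 Rlt_0_1 (Cmod_Zrest_ge1 i j)) as Hre.
    unfold Rdiv in Hre; rewrite Rinv_1 in Hre; lra.
  - rewrite both_ge_0 by auto. pose proof (ReZ_ge_small m0 i j Hi Hj (or_intror Hj0)). lra.
  - rewrite both_ge_0 by auto. pose proof (ReZ_ge_small m0 i j Hi Hj (or_introl Hi0)). lra.
Qed.

(* The combination equals [1 - delta M] on [{min >= M}], [-1] on [{m0 <= min < M}]
   and [- inv_coef_sum m0] on [{min < m0}]. *)
Lemma indicators_le_ReZ m0 M i j :
  (m0 <= M)%nat -> (2 <= M)%nat -> (1 <= i)%nat -> (1 <= j)%nat ->
  Q (i + j) * ((2 - delta M) * both_ge M i j + (inv_coef_sum m0 - 1) * both_ge m0 i j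
               - inv_coef_sum m0) <= Re (Z i j).
Proof.
  intros Hm0 HM Hi Hj.
  destruct (Nat.le_gt_cases M i) as [HMi|HMi]; [destruct (Nat.le_gt_cases M j) as [HMj|HMj]|].
  - rewrite !both_ge_1 by lia. pose proof (ReZ_ge_large M i j HM HMi HMj). nra.
  - rewrite (both_ge_0 M), Rmult_0_r, Rplus_0_l by auto. now apply indicators_low_le_ReZ.
  - rewrite (both_ge_0 M), Rmult_0_r, Rplus_0_l by auto. now apply indicators_low_le_ReZ.
Qed.

Lemma occ_key t m0 M : (m0 <= M)%nat -> (2 <= M)%nat ->
  (2 - delta M) * occ alpha t M <= occ alpha t m0 + inv_coef_sum m0 + / (1 + y ^ 2).
Proof.
  intros Hm0 HM. set (e := inv_coef_sum m0). set (q := Q (t + 2)).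
  assert (Hq : 1 + y ^ 2 <= q) by (apply Q_ge_sq; lia).
  assert (Hq0 : 0 < q) by (pose proof (pow2_ge_0 y); lra).
  assert (Hlow : expect alpha t
                   (fun i j => (2 - delta M) * both_ge M i j + (e - 1) * both_ge m0 i j - e)
                 = (2 - delta M) * occ alpha t M + (e - 1) * occ alpha t m0 - e).
  { rewrite (expect_lin alpha t (2 - delta M) 1 (both_ge M)
               (fun i j => (e - 1) * both_ge m0 i j + - e * 1)) by (intros; ring).
    rewrite (expect_lin alpha t (e - 1) (- e) (both_ge m0) (fun _ _ => 1)
               (fun i j => (e - 1) * both_ge m0 i j + - e * 1)) by (intros; ring).
    rewrite expect_const; unfold occ; ring. }
  assert (Hhigh : expect alpha t (fun i j => / q * Re (Z i j)) = / q).
  { rewrite (expect_lin alpha t (/ q) 0 (fun i j => Re (Z i j)) (fun _ _ => 1)) by (intros; ring).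
    rewrite expect_ReZ; ring. }
  assert (Hcmp : (2 - delta M) * occ alpha t M + (e - 1) * occ alpha t m0 - e <= / q).
  { rewrite <- Hlow, <- Hhigh. apply expect_le; intros i Hi.
    pose proof (indicators_le_ReZ m0 M i (t + 2 - i) Hm0 HM ltac:(lia) ltac:(lia)) as Hpt.
    replace (i + (t + 2 - i))%nat with (t + 2)%nat in Hpt by lia. fold q e in Hpt.
    apply (Rmult_le_reg_l q); [exact Hq0|].
    rewrite <- Rmult_assoc, Rinv_r, Rmult_1_l by lra; exact Hpt. }
  assert (/ q <= / (1 + y ^ 2)) by (apply Rinv_le_contravar; [pose proof (pow2_ge_0 y)|]; lra).
  assert (0 <= e * occ alpha t m0)
    by (apply Rmult_le_pos; [apply inv_coef_sum_nonneg|apply occ_bounds]).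
  lra.
Qed.
End Martingale.

Lemma Un_cv_const c : Un_cv (fun _ => c) c.
Proof.
  intros eps Heps; exists 0%nat; intros n _.
  unfold Rdist; rewrite Rminus_diag, Rabs_R0; exact Heps.
Qed.

(* Taking [L m0] within [eta] of the limit [l] gives [(2 - eta) l <= l + 2 eta] for every [eta]. *)
Lemma decreasing_cv0_of_halving (L : nat -> R) :
  Un_decreasing L -> (forall n, 0 <= L n) ->
  (forall m0 eta, 0 < eta -> exists M, (2 - eta) * L M <= L m0 + eta) ->
  Un_cv L 0.
Proof.
  intros Hdec Hnonneg Hhalf.
  destruct (decreasing_cv L Hdec) as [l Hl].
  { exists 0; intros x [n ->]; unfold opp_seq; specialize (Hnonneg n); lra. }
  pose proof (decreasing_ineq L l Hdec Hl) as Hle.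
  assert (Hl0 : 0 <= l) by exact (Rle_cv_lim Hnonneg (Un_cv_const 0) Hl).
  replace 0 with l; [exact Hl|]. apply Rle_antisym; [|exact Hl0].
  apply Rnot_lt_le; intros Hpos.
  set (eta := Rmin (l / 4) (1 / 4)).
  assert (Heta : 0 < eta) by (apply Rmin_pos; lra).
  assert (Hetal : eta <= l / 4) by apply Rmin_l.
  assert (Heta1 : eta <= 1 / 4) by apply Rmin_r.
  destruct (Hl eta Heta) as [N HN]. specialize (HN N (le_n N)).
  unfold Rdist in HN; apply Rabs_def2 in HN.
  destruct (Hhalf N eta Heta) as [M HM]. specialize (Hle M).
  assert ((2 - eta) * l <= (2 - eta) * L M) by (apply Rmult_le_compat_l; lra).
  nra.
Qed.

Lemma exists_y_small C eta : 0 <= C -> 0 < eta -> exists y, 0 < y /\ C / y + / (1 + y ^ 2) <= eta.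
Proof.
  intros HC Heta. set (y := 2 * (C + 1) / eta). exists y.
  assert (Hy : 0 < y) by (unfold y; apply Rdiv_lt_0_compat; lra).
  assert (Hsum : C / y + / y = eta / 2) by (unfold y; field; lra).
  assert (/ (1 + y ^ 2) <= / y) by (apply Rinv_le_contravar; nra).
  split; [exact Hy|lra].
Qed.

Section Limits.
Variable alpha : R.
Hypothesis Halpha : 1 < alpha.

Lemma occ_growing m : Un_growing (fun t => occ alpha t m).
Proof. intros t; apply occ_le_S. Qed.

Lemma occ_has_ub m : has_ub (fun t => occ alpha t m).
Proof. exists 1; intros x [t ->]; apply occ_bounds. Qed.

Definition occ_lim (m : nat) : R := proj1_sig (growing_cv _ (occ_growing m) (occ_has_ub m)).

Lemma occ_lim_cv m : Un_cv (fun t => occ alpha t m) (occ_lim m).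
Proof. unfold occ_lim; destruct (growing_cv _ _ _); assumption. Qed.

Lemma occ_lim_nonneg m : 0 <= occ_lim m.
Proof.
  pose proof (growing_ineq _ _ (occ_growing m) (occ_lim_cv m) 0).
  pose proof (occ_bounds alpha 0 m); lra.
Qed.

Lemma occ_lim_decreasing : Un_decreasing occ_lim.
Proof.
  intros m; exact (Rle_cv_lim (fun t => occ_S_le alpha t m) (occ_lim_cv (S m)) (occ_lim_cv m)).
Qed.

Lemma occ_lim_key y m0 M : 0 < y -> (m0 <= M)%nat -> (2 <= M)%nat ->
  (2 - delta alpha y M) * occ_lim M <= occ_lim m0 + inv_coef_sum alpha y m0 + / (1 + y ^ 2).
Proof.
  intros Hy Hm0 HM. apply (Rle_cv_lim (fun t => occ_key alpha y Halpha Hy t m0 M Hm0 HM)).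
  - apply CV_mult; [apply Un_cv_const|apply occ_lim_cv].
  - apply CV_plus; [apply CV_plus; [apply occ_lim_cv|]|]; apply Un_cv_const.
Qed.

Lemma occ_lim_halving m0 eta : 0 < eta -> exists M, (2 - eta) * occ_lim M <= occ_lim m0 + eta.
Proof.
  intros Heta.
  destruct (exists_y_small (sumn (fun m => npow alpha m) m0) (eta / 2)) as [y [Hy Hsmall]];
    [apply sumn_nonneg, npow_nonneg|lra|].
  assert (Hln : 0 < ln (1 + eta) / (2 * y)).
  { apply Rdiv_lt_0_compat; [rewrite <- ln_1; apply ln_increasing|]; lra. }
  destruct (zeta_tail_small alpha _ m0 Halpha Hln) as [M [Hm0 [HM Htail]]].
  exists M.
  assert (Hdelta : delta alpha y M <= eta).
  { unfold delta.
    enough (Hexp : exp (2 * (y * zeta_tail alpha M)) <= exp (ln (1 + eta)))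
      by (rewrite exp_ln in Hexp by lra; lra).
    apply exp_le.
    apply (Rmult_le_compat_l (2 * y)) in Htail; [|lra].
    replace (2 * y * (ln (1 + eta) / (2 * y))) with (ln (1 + eta)) in Htail by (field; lra). lra. }
  pose proof (occ_lim_key y m0 M Hy Hm0 HM) as Hkey. pose proof (occ_lim_nonneg M).
  unfold inv_coef_sum in Hkey. nra.
Qed.
End Limits.

Theorem mainTheorem7 (alpha : R) (Halpha : 1 < alpha) :
  exists L : nat -> R,
    (forall M : nat,
        Un_cv (fun k : nat => range_sum (fun i => bingo alpha i (k - i)) M (k - M)) (L M))
    /\ Un_cv L 0.
Proof.
  exists (occ_lim alpha). split.
  - intros M. apply (CV_shift _ 2).
    apply (Un_cv_ext (fun t => occ alpha t M)); [intros t; symmetry; apply range_sum_bingo|].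
    apply occ_lim_cv.
  - apply decreasing_cv0_of_halving;
      [apply occ_lim_decreasing|apply occ_lim_nonneg|now apply occ_lim_halving].
Qed.
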